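(* Let $i(x,y)=\frac{y^{2}}{x}\bullet y$. Every rational projective plane flow $\phi$ of level $0$ which is $i$-symmetric (i.e. $i\circ\phi\circ i=\phi$) can be obtained by the following construction: take a rational function $r(t)$ with $r(t)=r(1/t)$, set $J(x,y)=y\,r\big(\frac{x}{y}\big)$, and $$\phi(x,y)=\frac{x}{1-J(x,y)}\bullet\frac{y}{1-J(x,y)}.$$
   Context: Notation: $a\bullet b$ denotes the pair $(a,b)$. A projective plane flow is a pair $\phi=u\bullet v$ satisfying $(1-z)\phi(\mathbf{x})=\phi\big(\phi(\mathbf{x}z)\frac{1-z}{z}\big)$, $\mathbf x=(x,y)$, with $\lim_{z\to0}u(xz,yz)/z=x$, $\lim_{z\to0}v(xz,yz)/z=y$; its vector field is $\varpi\bullet\varrho$ with $\varpi=\frac{d}{dz}\frac{u(xz,yz)}{z}|_{z=0}$, $\varrho=\frac{d}{dz}\frac{v(xz,yz)}{z}|_{z=0}$. It is rational if $u,v$ are rational functions. A rational flow has level $0$ if $x\varrho-y\varpi\equiv0$; these are exactly the flows $\frac{x}{1-J(x,y)}\bullet\frac{y}{1-J(x,y)}$ with $J$ a rational $1$-homogeneous function (vector field $xJ\bullet yJ$). *)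

From HB Require Import structures.
From mathcomp Require Import all_boot all_order all_algebra.
From mathcomp Require Import all_classical all_reals all_analysis.
Set Implicit Arguments. Unset Strict Implicit. Unset Printing Implicit Defensive.
Import Order.TTheory GRing.Theory Num.Theory.
Import numFieldNormedType.Exports.
Local Open Scope ring_scope.
Local Open Scope classical_set_scope.

Section Defs.
Variable R : realType.

(* Evaluation of polynomials in 1, 2, 3 variables (x innermost). *)
Definition ev2 (p : {poly {poly R}}) (x y : R) : R := (p.[y%:P]).[x].
Definition ev3 (p : {poly {poly {poly R}}}) (x y z : R) : R :=
  ((p.[(z%:P)%:P]).[y%:P]).[x].

Definition generic1 (P : R -> Prop) : Prop :=
  exists D : {poly R}, D != 0 /\ forall t, D.[t] != 0 -> P t.
Definition generic2 (P : R -> R -> Prop) : Prop :=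
  exists D : {poly {poly R}}, D != 0 /\ forall x y, ev2 D x y != 0 -> P x y.
Definition generic3 (P : R -> R -> R -> Prop) : Prop :=
  exists D : {poly {poly {poly R}}}, D != 0 /\
    forall x y z, ev3 D x y z != 0 -> P x y z.

(* Rational functions, represented by (total) real functions which agree with
   P/Q wherever the denominator Q does not vanish. *)
Definition rational1 (r : R -> R) : Prop :=
  exists p q : {poly R}, q != 0 /\ forall t, q.[t] != 0 -> r t = p.[t] / q.[t].
Definition rational2 (u : R -> R -> R) : Prop :=
  exists P Q : {poly {poly R}}, Q != 0 /\
    forall x y, ev2 Q x y != 0 -> u x y = ev2 P x y / ev2 Q x y.

(* Projective plane flow phi = u • v:
   (1-z) phi(x) = phi( phi(xz) (1-z)/z )  (as an identity of rational functions),
   and lim_{z->0} u(xz,yz)/z = x, lim_{z->0} v(xz,yz)/z = y. *)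
Definition projective_flow (u v : R -> R -> R) : Prop :=
  generic3 (fun x y z =>
    let a := u (x * z) (y * z) * (1 - z) / z in
    let b := v (x * z) (y * z) * (1 - z) / z in
    (1 - z) * u x y = u a b /\ (1 - z) * v x y = v a b)
  /\ generic2 (fun x y =>
    (fun z => u (x * z) (y * z) / z) @ 0^' --> x /\
    (fun z => v (x * z) (y * z) / z) @ 0^' --> y).

Definition rational_flow (u v : R -> R -> R) : Prop :=
  rational2 u /\ rational2 v /\ projective_flow u v.

(* z |-> f(xz,yz)/z, extended at z = 0 by its limit c. *)
Definition extf (f : R -> R -> R) (c x y : R) : R -> R :=
  fun z => if z == 0 then c else f (x * z) (y * z) / z.

(* Level 0: the vector field varpi • rho, with
   varpi = d/dz (u(xz,yz)/z)|_{z=0}, rho = d/dz (v(xz,yz)/z)|_{z=0},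
   satisfies x rho - y varpi = 0 identically. *)
Definition level0 (u v : R -> R -> R) : Prop :=
  generic2 (fun x y => exists varpi rho : R,
    is_derive (0 : R) (1 : R) (extf u x x y) varpi /\
    is_derive (0 : R) (1 : R) (extf v y x y) rho /\
    x * rho - y * varpi = 0).

Definition i_symmetric (u v : R -> R -> R) : Prop :=
  generic2 (fun x y =>
    let a := y ^+ 2 / x in let b := y in
    (v a b) ^+ 2 / u a b = u x y /\ v a b = v x y).

End Defs.

(* A level-0 flow moves every point along its own ray.  On the ray through a
   generic point (x, y), the flow law makes U t := u(t x, t y) / t,
   V t := v(t x, t y) / t an integral curve of the vector field issued from
   (x, y), and level 0 keeps V / U = y / x.  The vector field being
   2-homogeneous, x / U t is then affine in t, so that u = x / (1 - J) and
   v = y / (1 - J) with J := 1 - x / u homogeneous of degree 1: first for small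
   t, then on the whole ray by the identity principle for polynomials.  Thus
   J(x, y) = y r(x / y) with r t := J(l t, l) / l for a generic l, r is rational
   because u is, and the i-symmetry v(l / t, l) = v(l t, l) is r(1/t) = r(t). *)

From HB Require Import structures.
From mathcomp Require Import all_boot all_order all_algebra.
From mathcomp Require Import all_classical all_reals all_analysis.
From mathcomp Require Import ring lra.
Import Order.TTheory GRing.Theory Num.Theory.
Import numFieldNormedType.Exports.
Set Implicit Arguments. Unset Strict Implicit. Unset Printing Implicit Defensive.
Local Open Scope ring_scope.
Local Open Scope classical_set_scope.

Section Bivariate.
Variable R : realType.
Implicit Types (S T : {poly {poly R}}) (p f g : {poly R}).

Lemma ev2M S T x y : ev2 (S * T) x y = ev2 S x y * ev2 T x y.
Proof. by rewrite /ev2 !hornerM. Qed.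

Lemma ev2X x y : ev2 (R:=R) 'X x y = y.
Proof. by rewrite /ev2 hornerX hornerC. Qed.

Lemma ev2CX x y : ev2 (R:=R) ('X%:P) x y = x.
Proof. by rewrite /ev2 hornerC hornerX. Qed.

Lemma ev2_map S x y : ev2 S x y = (map_poly (horner_eval x) S).[y].
Proof. by rewrite -[y in RHS](hornerC y x) horner_map. Qed.

Lemma ev2_neq0 S x y : ev2 S x y != 0 -> S != 0.
Proof. by apply: contraNneq => ->; rewrite /ev2 !horner0. Qed.

Definition subst2 S f g : {poly R} := (map_poly (comp_poly f) S).[g].

Lemma horner_subst2 S f g t : (subst2 S f g).[t] = ev2 S f.[t] g.[t].
Proof.
rewrite /subst2 -horner_evalE -horner_map /= -map_poly_comp ev2_map.
by congr horner; apply: eq_map_poly => c /=; rewrite !horner_evalE horner_comp.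
Qed.

Lemma ev2E S x y : ev2 S x y = \sum_(i < size S) (S`_i).[x] * y ^+ i.
Proof.
rewrite /ev2 (horner_coef S) horner_sum; apply: eq_bigr => i _.
by rewrite hornerM -rmorphXn hornerC.
Qed.

Lemma ev3E (A : {poly {poly {poly R}}}) x y z :
  ev3 A x y z = \sum_(i < size A) ev2 A`_i x y * z ^+ i.
Proof.
rewrite /ev3 (horner_coef A) !horner_sum; apply: eq_bigr => i _.
by rewrite /ev2 !hornerM -!rmorphXn !hornerC.
Qed.

Lemma ev2_cvg {T : Type} {F : set_system T} {FF : Filter F} S (f g : T -> R) a b :
  f @ F --> a -> g @ F --> b -> (fun t => ev2 S (f t) (g t)) @ F --> ev2 S a b.
Proof.
move=> fa gb; rewrite ev2E (funext (fun t => ev2E S (f t) (g t))).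
apply: cvg_big => //; first exact: add_continuous.
move=> i _; apply: cvgM; first exact: (continuous_cvg _ (@continuous_horner _ _ a)).
exact: (continuous_cvg _ (@exprn_continuous _ _ _)).
Qed.

Lemma ev3_cvg {T : Type} {F : set_system T} {FF : Filter F}
    (A : {poly {poly {poly R}}}) (f g h : T -> R) a b c :
  f @ F --> a -> g @ F --> b -> h @ F --> c ->
  (fun t => ev3 A (f t) (g t) (h t)) @ F --> ev3 A a b c.
Proof.
move=> fa gb hc; rewrite ev3E (funext (fun t => ev3E A (f t) (g t) (h t))).
apply: cvg_big => //; first exact: add_continuous.
move=> i _; apply: cvgM; first exact: ev2_cvg.
exact: (continuous_cvg _ (@exprn_continuous _ _ _)).
Qed.

Definition homog (N : nat) p : {poly {poly R}} :=
  \sum_(j < N) (p`_j *: 'X^j)%:P * 'X^(N - j).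

Lemma homogE N p x y : (size p <= N)%N -> y != 0 ->
  ev2 (homog N p) x y = y ^+ N * p.[x / y].
Proof.
move=> sp y0; rewrite (horner_coef_wide _ sp) mulr_sumr /homog /ev2 !horner_sum.
apply: eq_bigr => j _; rewrite !hornerE exprMn exprVn.
rewrite -[X in y ^+ X](subnK (ltnW (ltn_ord j))) exprD.
change (p`_j * x ^+ j * y ^+ (N - j) =
  y ^+ (N - j) * y ^+ j * p`_j * (x ^+ j / y ^+ j)).
by field; rewrite expf_neq0.
Qed.

End Bivariate.

Section PolyNear.
Variable R : realType.
Implicit Types (p : {poly R}) (S : {poly {poly R}}).

Lemma poly_neq0_near p (a : R) : p != 0 -> \forall t \near a^', p.[t] != 0.
Proof.
move=> p0; have [m [q /implyP/(_ p0) qa ->]] := multiplicity_XsubC p a.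
have qn : \forall t \near a, q.[t] != 0.
  exact: (cvgr_neq0 _ (@continuous_horner _ q a) qa).
near=> t; rewrite hornerM horner_exp hornerXsubC mulf_neq0 ?expf_neq0 //.
  by near: t; apply: cvg_within.
by rewrite subr_eq0; near: t; exact: nbhs_dnbhs_neq.
Unshelve. all: by end_near. Qed.

Lemma exists_horner_neq0 p (a : R) : p != 0 -> exists2 t, t != a & p.[t] != 0.
Proof.
move=> p0; have [t [ta pt]] := filter_ex (filterI (nbhs_dnbhs_neq a) (poly_neq0_near a p0)).
by exists t.
Qed.

Lemma exists_ev2_neq0 S : S != 0 -> exists x y, ev2 S x y != 0.
Proof.
move=> S0; have lS0 : lead_coef S != 0 by rewrite lead_coef_eq0.
have [x _ hx] := exists_horner_neq0 0 lS0.
have Sx0 : map_poly (horner_eval x) S != 0.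
  apply: contraNneq hx => Sx0.
  by rewrite lead_coefE -horner_evalE -coef_map Sx0 coef0.
have [y _ hy] := exists_horner_neq0 0 Sx0.
by exists x, y; rewrite ev2_map.
Qed.

End PolyNear.

(* The flow law is only used near [z = 1]: split off the factor [(z - 1)^m]. *)
Lemma generic3_off_z1 (R : realType) (P : R -> R -> R -> Prop) :
  generic3 P -> exists D : {poly {poly {poly R}}},
    D.[1] != 0 /\ forall x y z, z != 1 -> ev3 D x y z != 0 -> P x y z.
Proof.
move=> [D3 [D30 HD3]].
have [m [D /implyP/(_ D30) D1 D3E]] := multiplicity_XsubC D3 1.
exists D; split => // x y z z1 Dz; apply: HD3.
by rewrite D3E /ev3 !hornerE mulf_neq0 // expf_neq0 // subr_eq0.
Qed.

Section RealAnalysis.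
Variable R : realType.
Implicit Types (f g : R -> R) (d t L : R).

Lemma near_dnbhs_right (P : R -> Prop) (a : R) :
  (\forall t \near a^', P t) -> \forall t \near a^'+, P t.
Proof.
rewrite !near_withinE => H; apply: filterS H => t Ht ta; apply: Ht.
by rewrite /= gt_eqF.
Qed.

Lemma cvg_dnbhs_right f (a l : R) : f @ a^' --> l -> f @ a^'+ --> l.
Proof. by move=> fl A /fl; exact: near_dnbhs_right. Qed.

Lemma near0_right_itv (P : R -> Prop) :
  (\forall t \near 0^'+, P t) -> exists2 d, 0 < d & forall t, 0 < t < d -> P t.
Proof.
rewrite near_withinE => /nbhs_ballP [d /= d0 H]; exists d => // t /andP[t0 td].
by apply: H => //; rewrite -ball_normE /= sub0r normrN gtr0_norm.
Qed.

Lemma itv_near0_right (P : R -> Prop) d : 0 < d ->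
  (forall t, 0 < t < d -> P t) -> \forall t \near 0^'+, P t.
Proof.
move=> d0 H; near=> t; apply: H; apply/andP; split.
  by near: t; exact: nbhs_right_gt.
by near: t; exact: nbhs_right_lt.
Unshelve. all: by end_near. Qed.

Lemma is_derive_0_itv_cst f d :
  (forall t, 0 < t < d -> is_derive t (1 : R) f 0) ->
  {in [pred t | 0 < t < d] &, forall a b, f a = f b}.
Proof.
move=> f'0 a b; wlog ab : a b / a <= b.
  by move=> W ha hb; case: (leP a b) => [/W|/ltW /W]; [exact | move=> /(_ hb ha)].
rewrite !inE => /andP[a0 ad] /andP[b0 bd].
have inab t : a <= t <= b -> 0 < t < d.
  by move=> /andP[? ?]; apply/andP; split; lra.
apply/eqP; rewrite eq_sym -subr_eq0.
have [||c _ ->] := @MVT_segment R f (fun _ => 0) a b ab.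
- move=> t; rewrite in_itv /= => /andP[/ltW at' /ltW tb].
  by apply/f'0/inab; rewrite at' tb.
- by apply: derivable_within_continuous => t; rewrite in_itv /= => /inab /f'0 [].
by rewrite mul0r.
Qed.

Lemma is_derive_0_eq_lim f d L :
  (forall t, 0 < t < d -> is_derive t (1 : R) f 0) ->
  f @ 0^'+ --> L -> forall t, 0 < t < d -> f t = L.
Proof.
move=> f'0 fL t td; have d0 : 0 < d by case/andP: td => ? ?; lra.
have ft : f @ 0^'+ --> f t.
  apply: cvg_near_cst; apply: (itv_near0_right d0) => s sd.
  by apply: (is_derive_0_itv_cst f'0); rewrite inE.
exact: (cvg_unique _ ft fL).
Qed.

Lemma is_derive_translate f g t d :
  (\forall s \near 0, g s = f (t + s)) ->
  is_derive (0 : R) (1 : R) g d -> is_derive t (1 : R) f d.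
Proof.
move=> gf g'd; have : is_derive t 1 (g \o shift (- t)) (d * 1).
  by apply: is_derive1_comp; [rewrite /= subrr | exact: is_derive_shift].
rewrite mulr1; apply: near_eq_is_derive; apply/nbhs0P.
by apply: filterS gf => e /=; rewrite (addrC t e) addrK.
Qed.

End RealAnalysis.

Section PolyOnRays.
Variable R : realType.
Implicit Types (S T : {poly {poly R}}) (p : {poly R}).

Lemma near_right_poly_eq0 p (a : R) : (\forall t \near a^'+, p.[t] = 0) -> p = 0.
Proof.
move=> pa; apply/eqP/negP => /negP p0.
have [t [pt /eqP]] := filter_ex (filterI pa (near_dnbhs_right (poly_neq0_near a p0))).
by rewrite pt.
Qed.

Lemma horner_subst2_ray S (x y t : R) :
  (subst2 S (x *: 'X) (y *: 'X)).[t] = ev2 S (x * t) (y * t).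
Proof. by rewrite horner_subst2 !hornerZ hornerX. Qed.

Lemma horner_subst2_line S (l t : R) :
  (subst2 S (l *: 'X) l%:P).[t] = ev2 S (l * t) l.
Proof. by rewrite horner_subst2 hornerZ hornerX hornerC. Qed.

Lemma ev2_ray_neq0_near S (x y : R) :
  ev2 S x y != 0 -> \forall t \near 0^'+, ev2 S (x * t) (y * t) != 0.
Proof.
move=> Sxy; set p := subst2 S (x *: 'X) (y *: 'X).
have p0 : p != 0.
  apply: contraNneq Sxy => p0.
  by rewrite -[x]mulr1 -[y]mulr1 -horner_subst2_ray -/p p0 horner0.
by apply: filterS (near_dnbhs_right (poly_neq0_near 0 p0)) => t; rewrite horner_subst2_ray.
Qed.

Lemma ray_eq_of_itv S T (x y c J d : R) : 0 < d ->
  (forall t, 0 < t < d ->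
     t * c * ev2 T (x * t) (y * t) = ev2 S (x * t) (y * t) * (1 - t * J)) ->
  forall m, m * c * ev2 T (x * m) (y * m) = ev2 S (x * m) (y * m) * (1 - m * J).
Proof.
move=> d0 STt; set ray := fun W => subst2 W (x *: 'X) (y *: 'X).
set p := 'X * c%:P * ray T - ray S * (1 - 'X * J%:P).
have pE m : p.[m] = m * c * ev2 T (x * m) (y * m) - ev2 S (x * m) (y * m) * (1 - m * J).
  by rewrite !hornerE !horner_subst2_ray.
have p0 : p = 0.
  apply: (near_right_poly_eq0 (a := 0)); apply: (itv_near0_right d0) => t /STt.
  by rewrite pE => ->; rewrite subrr.
by move=> m; apply/eqP; rewrite -subr_eq0 -pE p0 horner0.
Qed.

End PolyOnRays.

Section ExtfScaling.
Variable R : realType.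
Implicit Types (f : R -> R -> R) (c x y k : R).

Lemma extfZ f c x y k : k != 0 ->
  extf f (k * c) (k * x) (k * y) = (fun s => k * extf f c x y (k * s)).
Proof.
move=> k0; apply/funext => s; rewrite /extf mulf_eq0 (negbTE k0) /=.
case: eqP => [//|/eqP s0]; rewrite -!mulrA (mulrCA k) (mulrCA k).
by field; rewrite k0 s0.
Qed.

(* The vector field [varpi] of a flow is homogeneous of degree 2. *)
Lemma is_derive_extfZ f c x y k w : k != 0 ->
  is_derive (0 : R) (1 : R) (extf f c x y) w ->
  is_derive (0 : R) (1 : R) (extf f (k * c) (k * x) (k * y)) (k ^+ 2 * w).
Proof.
move=> k0 f'w; rewrite extfZ //.
have f'w' : is_derive (k * 0) (1 : R) (extf f c x y) w by rewrite mulr0.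
have k' : is_derive (0 : R) (1 : R) ( *%R k) (k * 1) by apply: is_deriveZ.
have := is_deriveZ k (is_derive1_comp f'w' k'); rewrite mulr1.
by move/is_derive_eq; apply; rewrite /GRing.scale /=; ring.
Qed.

End ExtfScaling.

Definition ray_law (R : realType) (P Q P' Q' : {poly {poly R}}) (x y J : R) :=
  forall m : R,
    m * x * ev2 Q (x * m) (y * m) = ev2 P (x * m) (y * m) * (1 - m * J) /\
    m * y * ev2 Q' (x * m) (y * m) = ev2 P' (x * m) (y * m) * (1 - m * J).

Section RayOfFlow.
Variable R : realType.
Variables (u v : R -> R -> R) (P Q P' Q' DL D0 : {poly {poly R}}).
Variable D3 : {poly {poly {poly R}}}.
Hypothesis u_rat : forall x y, ev2 Q x y != 0 -> u x y = ev2 P x y / ev2 Q x y.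
Hypothesis v_rat : forall x y, ev2 Q' x y != 0 -> v x y = ev2 P' x y / ev2 Q' x y.
Hypothesis flow_eq : forall x y z, z != 1 -> ev3 D3 x y z != 0 ->
  let a := u (x * z) (y * z) * (1 - z) / z in
  let b := v (x * z) (y * z) * (1 - z) / z in
  (1 - z) * u x y = u a b /\ (1 - z) * v x y = v a b.
Hypothesis flow_lim : forall x y, ev2 DL x y != 0 ->
  (fun z => u (x * z) (y * z) / z) @ 0^' --> x /\
  (fun z => v (x * z) (y * z) / z) @ 0^' --> y.
Hypothesis flow_level0 : forall x y, ev2 D0 x y != 0 -> exists varpi rho : R,
  is_derive (0 : R) (1 : R) (extf u x x y) varpi /\
  is_derive (0 : R) (1 : R) (extf v y x y) rho /\
  x * rho - y * varpi = 0.

Section Point.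
Variables x y : R.
Hypotheses (x0 : x != 0) (DLxy : ev2 DL x y != 0) (D0xy : ev2 D0 x y != 0).
Hypotheses (D3xy : ev3 D3 x y 1 != 0) (Qxy : ev2 Q x y != 0) (Q'xy : ev2 Q' x y != 0).

Let U t := u (x * t) (y * t) / t.
Let V t := v (x * t) (y * t) / t.

Let U_lim : U @ 0^' --> x. Proof. exact: (flow_lim DLxy).1. Qed.
Let V_lim : V @ 0^' --> y. Proof. exact: (flow_lim DLxy).2. Qed.

Lemma ray_generic : exists2 d, 0 < d & forall t, 0 < t < d ->
  [/\ U t != 0, ev2 D0 (U t) (V t) != 0, ev3 D3 (x * t) (y * t) 1 != 0,
      ev2 Q (x * t) (y * t) != 0 & ev2 Q' (x * t) (y * t) != 0].
Proof.
apply: near0_right_itv; near=> t; split.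
- by near: t; apply: near_dnbhs_right; exact: (cvgr_neq0 _ U_lim x0).
- near: t; apply: near_dnbhs_right.
  exact: (cvgr_neq0 _ (ev2_cvg (S := D0) U_lim V_lim) D0xy).
- by near: t; exact: (ev2_ray_neq0_near (S := D3.[1])).
- by near: t; exact: ev2_ray_neq0_near.
- by near: t; exact: ev2_ray_neq0_near.
Unshelve. all: by end_near. Qed.

(* By the flow law, [(U, V)] at time [t + s] is the rescaled flow of
   [(U t, V t)] at time [s], so [(U, V)] is an integral curve of the vector
   field. *)
Lemma ray_extf t : 0 < t -> ev3 D3 (x * t) (y * t) 1 != 0 ->
  \forall s \near 0, extf u (U t) (U t) (V t) s = U (t + s) /\
                     extf v (V t) (U t) (V t) s = V (t + s).
Proof.
move=> t0 D3t; have t0' : t != 0 by rewrite gt_eqF.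
have ts_t : (fun s : R => t + s) @ (0 : R) --> t.
  by rewrite -[X in _ --> X]addr0; apply: cvgD; [exact: cvg_cst | exact: cvg_id].
have z_1 : (fun s : R => t / (t + s)) @ (0 : R) --> (1 : R).
  by rewrite -(divff t0'); apply: cvgM; [exact: cvg_cst | exact: cvgV].
have ts0 := cvgr_neq0 _ ts_t t0'.
have D3ts := cvgr_neq0 _
  (ev3_cvg (A := D3) (cvgM ts_t (cvg_cst x)) (cvgM ts_t (cvg_cst y)) z_1).
near=> s; rewrite /extf; have [->|s0] := eqVneq s 0; first by rewrite addr0.
have ts0' : t + s != 0 by near: s; exact: ts0.
have D3z : ev3 D3 ((t + s) * x) ((t + s) * y) (t / (t + s)) != 0.
  by near: s; apply: D3ts; rewrite !(mulrC t).
set z := t / (t + s) in D3z *.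
have z1 : z != 1.
  rewrite /z -subr_eq0 -(divff ts0') -mulrBl opprD addrA subrr add0r.
  by rewrite mulf_neq0 ?oppr_eq0 ?invr_eq0.
have [] := flow_eq z1 D3z; rewrite /= /z.
have -> : (t + s) * x * (t / (t + s)) = x * t by field.
have -> : (t + s) * y * (t / (t + s)) = y * t by field.
have -> : u (x * t) (y * t) * (1 - t / (t + s)) / (t / (t + s)) = U t * s.
  by rewrite /U; field; rewrite t0' ts0'.
have -> : v (x * t) (y * t) * (1 - t / (t + s)) / (t / (t + s)) = V t * s.
  by rewrite /V; field; rewrite t0' ts0'.
move=> <- <-; rewrite /U /V !(mulrC x) !(mulrC y); split; field; rewrite ?ts0' ?s0.
Unshelve. all: by end_near. Qed.

Lemma ray_is_derive t : 0 < t -> ev2 D0 (U t) (V t) != 0 ->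
  ev3 D3 (x * t) (y * t) 1 != 0 -> exists w r,
  [/\ is_derive t (1 : R) U w, is_derive t (1 : R) V r, U t * r - V t * w = 0
    & is_derive (0 : R) (1 : R) (extf u (U t) (U t) (V t)) w].
Proof.
move=> t0 D0t D3t; have [w [r [u'w [v'r wr]]]] := flow_level0 D0t.
have UV := ray_extf t0 D3t.
exists w, r; split => //.
- by apply: is_derive_translate u'w; apply: filterS UV => s [].
- by apply: is_derive_translate v'r; apply: filterS UV => s [].
Qed.

Section Interval.
Variable d : R.
Hypothesis ray_gen : forall t, 0 < t < d ->
  [/\ U t != 0, ev2 D0 (U t) (V t) != 0, ev3 D3 (x * t) (y * t) 1 != 0,
      ev2 Q (x * t) (y * t) != 0 & ev2 Q' (x * t) (y * t) != 0].

Lemma ray_V_ratio t : 0 < t < d -> V t = y / x * U t.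
Proof.
move=> td; have [U0 _ _ _ _] := ray_gen td; rewrite -[LHS](divfK U0); congr (_ * _).
apply: (is_derive_0_eq_lim (f := fun t => V t / U t)) td => [s sd|].
  have [Us0 D0s D3s _ _] := ray_gen sd; have s0 : 0 < s by case/andP: sd.
  have [w [r [U'w V'r wr _]]] := ray_is_derive s0 D0s D3s.
  apply: is_derive_eq (is_deriveM V'r (is_deriveV Us0 U'w)) _.
  rewrite /GRing.scale /=; transitivity ((U s * r - V s * w) / U s ^+ 2).
    by field.
  by rewrite wr mul0r.
by apply: cvg_dnbhs_right; apply: cvgM V_lim (cvgV x0 U_lim).
Qed.

Lemma ray_is_derive_U w0 t : is_derive (0 : R) (1 : R) (extf u x x y) w0 ->
  0 < t < d -> is_derive t (1 : R) U ((U t / x) ^+ 2 * w0).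
Proof.
move=> u'w0 td; have [U0 D0t D3t _ _] := ray_gen td; have t0 : 0 < t by case/andP: td.
have [w [_ [U'w _ _ ext'w]]] := ray_is_derive t0 D0t D3t.
have k0 : U t / x != 0 by rewrite mulf_neq0 ?invr_eq0.
have kyV : U t / x * y = V t by rewrite (ray_V_ratio td); field.
have := is_derive_extfZ k0 u'w0; rewrite divfK // kyV => ext'w0.
suff -> : (U t / x) ^+ 2 * w0 = w by [].
by case: ext'w0 => _ <-; case: ext'w => _ <-.
Qed.

Lemma ray_invU_affine w0 t : is_derive (0 : R) (1 : R) (extf u x x y) w0 ->
  0 < t < d -> x / U t + w0 / x * t = 1.
Proof.
move=> u'w0; move: t; apply: (is_derive_0_eq_lim (f := fun t => x / U t + w0 / x * t)).
  move=> t td; have [U0 _ _ _ _] := ray_gen td.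
  have := is_deriveD (is_deriveZ x (is_deriveV U0 (ray_is_derive_U u'w0 td)))
    (is_deriveZ (w0 / x) (@is_derive_id _ _ t 1)).
  by move/is_derive_eq; apply; rewrite /GRing.scale /=; field; rewrite ?U0 ?x0.
have -> : 1 = x / x + w0 / x * 0 by rewrite mulr0 addr0 divff.
apply: cvg_dnbhs_right; apply: cvgD; apply: cvgM; try exact: cvg_cst.
  exact: cvgV.
exact: cvg_within.
Qed.

End Interval.

Lemma ray_identity : exists J, ray_law P Q P' Q' x y J.
Proof.
have [d d0 ray_gen] := ray_generic.
have [w0 [_ [u'w0 _]]] := flow_level0 D0xy.
exists (w0 / x) => m; split; apply: (ray_eq_of_itv d0) => t td {m};
  have [U0 _ _ Qt Q't] := ray_gen t td;
  have t0 : t != 0 by case/andP: td => t0 _; rewrite gt_eqF.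
- have <- : U t * t * ev2 Q (x * t) (y * t) = ev2 P (x * t) (y * t).
    by rewrite /U divfK // u_rat // divfK.
  by rewrite -(ray_invU_affine ray_gen u'w0 td); field; rewrite x0 U0.
- have <- : V t * t * ev2 Q' (x * t) (y * t) = ev2 P' (x * t) (y * t).
    by rewrite /V divfK // v_rat // divfK.
  rewrite (ray_V_ratio ray_gen td) -(ray_invU_affine ray_gen u'w0 td).
  by field; rewrite x0 U0.
Qed.

End Point.
End RayOfFlow.

(* [u = x / (1 - J)] solved for [J]. *)
Definition flowJ (R : realType) (u : R -> R -> R) (x y : R) : R := 1 - x / u x y.

(* The paper's [r]: [J (x, y) = y * profile u l (x / y)] by homogeneity. *)
Definition profile (R : realType) (u : R -> R -> R) (l t : R) : R :=
  flowJ u (l * t) l / l.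

Section LevelZero.
Variable R : realType.
Variables (u v : R -> R -> R) (P Q P' Q' Dc Di : {poly {poly R}}).
Hypothesis u_rat : forall x y, ev2 Q x y != 0 -> u x y = ev2 P x y / ev2 Q x y.
Hypothesis v_rat : forall x y, ev2 Q' x y != 0 -> v x y = ev2 P' x y / ev2 Q' x y.
Hypothesis Dc_ray : forall x y, ev2 Dc x y != 0 ->
  [/\ x != 0, ev2 Q x y != 0, ev2 Q' x y != 0 & exists J, ray_law P Q P' Q' x y J].
Hypothesis i_sym : forall x y, ev2 Di x y != 0 -> v (y ^+ 2 / x) y = v x y.

Lemma flowJ_ray x y m : ev2 Dc x y != 0 -> m != 0 ->
  ev2 Q (x * m) (y * m) != 0 -> flowJ u (x * m) (y * m) = m * flowJ u x y.
Proof.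
move=> /Dc_ray [x0 Qxy _ [J ray]].
suff flowJm k : k != 0 -> ev2 Q (x * k) (y * k) != 0 -> flowJ u (x * k) (y * k) = k * J.
  have J1 : flowJ u x y = J.
    by have := flowJm 1 (oner_neq0 _); rewrite !mulr1 mul1r; apply.
  by move=> m0 Qm; rewrite J1 flowJm.
move=> k0 Qk; have [uray _] := ray k; have xk0 : k * x != 0 by rewrite mulf_neq0.
have Jk0 : 1 - k * J != 0.
  by apply: contraNneq (mulf_neq0 xk0 Qk); rewrite uray => ->; rewrite mulr0.
rewrite /flowJ u_rat //.
have -> : ev2 P (x * k) (y * k) = k * x * ev2 Q (x * k) (y * k) / (1 - k * J).
  by rewrite uray mulfK.
by field; rewrite ?Jk0 ?Qk ?x0 ?k0.
Qed.

Lemma uv_flowJ x y : ev2 Dc x y != 0 -> [/\ 1 - flowJ u x y != 0,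
  u x y = x / (1 - flowJ u x y) & v x y = y / (1 - flowJ u x y)].
Proof.
move=> /Dc_ray [x0 Qxy Q'xy [J /(_ 1)]]; rewrite !mulr1 !mul1r => -[uray vray].
have J0 : 1 - J != 0.
  by apply: contraNneq (mulf_neq0 x0 Qxy); rewrite uray => ->; rewrite mulr0.
have uJ : u x y = x / (1 - J) by rewrite u_rat //; apply/eqP; rewrite eqr_div // uray.
have -> : flowJ u x y = J by rewrite /flowJ uJ invf_div; field.
by split => //; rewrite v_rat //; apply/eqP; rewrite eqr_div // vray.
Qed.

Section Line.
Variable l : R.
Hypothesis l0 : l != 0.
Hypothesis line_generic : subst2 (Dc * Di) (l *: 'X) l%:P != 0.

Let line_Dc t : (subst2 (Dc * Di) (l *: 'X) l%:P).[t] != 0 -> ev2 Dc (l * t) l != 0.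
Proof. by rewrite horner_subst2_line ev2M mulf_eq0 negb_or => /andP[]. Qed.

Lemma profile_rational : rational1 (profile u l).
Proof.
set Pl := subst2 P (l *: 'X) l%:P; set Ql := subst2 Q (l *: 'X) l%:P.
set B := l%:P * Pl * Ql.
have BE t : B.[t] = l * ev2 P (l * t) l * ev2 Q (l * t) l.
  by rewrite !hornerM hornerC !horner_subst2_line.
exists ((Pl - l *: 'X * Ql) * Ql), B; split => [|t].
  have [t _ /line_Dc Dct] := exists_horner_neq0 0 line_generic.
  have [J0 ulx _] := uv_flowJ Dct; have [lt0 Qt _ _] := Dc_ray Dct.
  have : u (l * t) l != 0 by rewrite ulx mulf_neq0 ?invr_eq0.
  rewrite u_rat // mulf_eq0 negb_or => /andP[Pt _].
  by apply: contraNneq (mulf_neq0 (mulf_neq0 l0 Pt) Qt) => B0; rewrite -BE B0 horner0.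
rewrite BE !mulf_eq0 !negb_or => /andP[/andP[_ Pt] Qt].
rewrite /profile /flowJ u_rat // !hornerE !horner_subst2_line.
by field; rewrite ?l0 ?Pt ?Qt.
Qed.

Lemma profile_inv : generic1 (fun t => profile u l t = profile u l t^-1).
Proof.
set e := subst2 (Dc * Di) (l *: 'X) l%:P.
(* [e'.[t] != 0] makes [(l / t, l)] generic. *)
set e' := subst2 (homog (size e) e) 1 'X.
have e'E t : t != 0 -> e'.[t] = t ^+ size e * e.[t^-1].
  by move=> t0; rewrite horner_subst2 hornerC hornerX homogE // mul1r.
have e'0 : e' != 0.
  have [t t0 et] := exists_horner_neq0 0 line_generic.
  apply/eqP => e'0; move: (e'E t^-1 (invr_neq0 t0)); rewrite e'0 horner0 invrK.
  by move/esym/eqP; rewrite mulf_eq0 expf_eq0 invr_eq0 (negbTE t0) andbF (negbTE et).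
exists ('X * e * e'); split; first by rewrite !mulf_neq0 ?polyX_eq0.
move=> t; rewrite !hornerM hornerX !mulf_eq0 !negb_or => /andP[/andP[t0 et] e't].
rewrite e'E // mulf_eq0 negb_or expf_eq0 (negbTE t0) andbF /= in e't.
have Dit : ev2 Di (l * t) l != 0.
  by move: et; rewrite horner_subst2_line ev2M mulf_eq0 negb_or => /andP[].
have := i_sym Dit; have -> : l ^+ 2 / (l * t) = l * t^-1 by field; rewrite ?l0 ?t0.
have [J0 _ ->] := uv_flowJ (line_Dc et).
have [J0' _ ->] := uv_flowJ (line_Dc e't).
by move/eqP; rewrite eqr_div // /profile => /eqP/(mulfI l0)/addrI/oppr_inj ->.
Qed.

Lemma profile_flow : generic2 (fun x y =>
  u x y = x / (1 - y * profile u l (x / y)) /\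
  v x y = y / (1 - y * profile u l (x / y))).
Proof.
set e := subst2 (Dc * Di) (l *: 'X) l%:P.
exists (Dc * 'X * homog (size e) e); split.
  have [t _ et] := exists_horner_neq0 0 line_generic.
  apply: (@ev2_neq0 _ _ (l * t) l).
  rewrite !ev2M ev2X homogE // (_ : l * t / l = t); last by rewrite mulrAC divff ?mul1r.
  by rewrite !mulf_neq0 ?expf_neq0 ?line_Dc.
move=> x y; rewrite !ev2M ev2X !mulf_eq0 !negb_or => /andP[/andP[Dcxy y0] hxy].
rewrite homogE // mulf_eq0 negb_or expf_eq0 (negbTE y0) andbF /= in hxy.
have [_ Qlxy _ _] := Dc_ray (line_Dc hxy).
have yJ : y * profile u l (x / y) = flowJ u x y.
  have my0 : l / y != 0 by rewrite mulf_neq0 ?invr_eq0.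
  have Exm : x * (l / y) = l * (x / y) by rewrite mulrCA.
  have Eym : y * (l / y) = l by rewrite mulrCA divff ?mulr1.
  have := flowJ_ray Dcxy my0; rewrite Exm Eym => /(_ Qlxy).
  by rewrite /profile => ->; field; rewrite ?l0 ?y0.
by have [_ -> ->] := uv_flowJ Dcxy; rewrite yJ.
Qed.

End Line.

End LevelZero.

Theorem proposition5 (R : realType) (u v : R -> R -> R) :
  rational_flow u v -> level0 u v -> i_symmetric u v ->
  exists r : R -> R,
    rational1 r /\
    generic1 (fun t => r t = r t^-1) /\
    generic2 (fun x y =>
      u x y = x / (1 - y * r (x / y)) /\
      v x y = y / (1 - y * r (x / y))).
Proof.
move=> [[P [Q [Q0 u_rat]]] [[P' [Q' [Q'0 v_rat]]] [/generic3_off_z1 flow_gen lim_gen]]].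
have [D3 [D31 flow_eq]] := flow_gen; have [DL [DL0 flow_lim]] := lim_gen.
move=> [D0 [D00 flow_level0]] [Di [Di0 /= i_sym_uv]].
have i_sym x y : ev2 Di x y != 0 -> v (y ^+ 2 / x) y = v x y by case/i_sym_uv.
pose Dc := 'X%:P * DL * D0 * D3.[1] * Q * Q'.
have Dc_ray x y : ev2 Dc x y != 0 ->
  [/\ x != 0, ev2 Q x y != 0, ev2 Q' x y != 0 & exists J, ray_law P Q P' Q' x y J].
  rewrite !ev2M ev2CX !mulf_eq0 !negb_or.
  move=> /andP[/andP[/andP[/andP[/andP[x0 DLxy] D0xy] D3xy] Qxy] Q'xy].
  split => //; exact: (ray_identity u_rat v_rat flow_eq flow_lim flow_level0
                         x0 DLxy D0xy D3xy Qxy Q'xy).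
have E0 : Dc * Di * 'X != 0 by rewrite !mulf_neq0 ?polyC_eq0 ?polyX_eq0.
have [x1 [l]] := exists_ev2_neq0 E0.
rewrite ev2M ev2X mulf_eq0 negb_or => /andP[DcDi l0].
have line_generic : subst2 (Dc * Di) (l *: 'X) l%:P != 0.
  apply: contraNneq DcDi => e0.
  by rewrite -(divfK l0 x1) (mulrC _ l) -horner_subst2_line e0 horner0.
exists (profile u l); split; last split.
- exact: (profile_rational u_rat v_rat Dc_ray l0 line_generic).
- exact: (profile_inv u_rat v_rat Dc_ray i_sym l0 line_generic).
- exact: (profile_flow u_rat v_rat Dc_ray l0 line_generic).
Qed.
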